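(* Let $(\mathcal{C},\wedge,S)$ be an $E_n$-monoidal semiadditive 1-category with cofibers over which $\wedge$ distributes, and let $m\in\mathbb{N}$. Then the cofiber $S/m$ of $m:S\to S$ is a closed idempotent. Moreover $\mathcal{C}(C\wedge S/m,D)\cong\mathcal{C}(C,D)[m]$ (the $m$-torsion subgroup) for all $C,D\in\mathcal{C}$, so the $S/m$-stable objects are those $C$ such that $m=0$ in $\mathcal{C}(C,D)$ for all $D$, and the $S/m$-torsion objects are those $C$ with $\mathcal{C}(C,D)[m]=0$ for all $D$.
   Context: $m:S\to S$ is the $m$-fold sum of the identity. A closed idempotent is $E$ with $r:S\to E$ such that $r\wedge\mathrm{id}_E:E\to E\wedge E$ is an isomorphism; here $r:S\to S/m$ is the cofiber map. $X$ is $S/m$-stable if $r\wedge\mathrm{id}_X$ is an isomorphism and $S/m$-torsion if $S/m\wedge X\cong 0$. *)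

(* A category whose hom-sets carry commutative-monoid structure (the
   canonical enrichment of a semiadditive category), together with monoidal
   structure data (tensor, unit, associator, unitors with inverses). *)
Record SMCat := {
  Ob : Type;
  Hom : Ob -> Ob -> Type;
  idm : forall A : Ob, Hom A A;
  comp : forall A B C : Ob, Hom B C -> Hom A B -> Hom A C;
  hzero : forall A B : Ob, Hom A B;
  hadd : forall A B : Ob, Hom A B -> Hom A B -> Hom A B;
  tens : Ob -> Ob -> Ob;
  tensh : forall A B C D : Ob, Hom A B -> Hom C D -> Hom (tens A C) (tens B D);
  tunit : Ob;
  alpha : forall A B C : Ob, Hom (tens (tens A B) C) (tens A (tens B C));
  alpha_inv : forall A B C : Ob, Hom (tens A (tens B C)) (tens (tens A B) C);
  lam : forall A : Ob, Hom (tens tunit A) A;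
  lam_inv : forall A : Ob, Hom A (tens tunit A);
  rho : forall A : Ob, Hom (tens A tunit) A;
  rho_inv : forall A : Ob, Hom A (tens A tunit)
}.

Arguments Hom {s} _ _.
Arguments idm {s} _.
Arguments comp {s A B C} _ _.
Arguments hzero {s} A B.
Arguments hadd {s A B} _ _.
Arguments tens {s} _ _.
Arguments tensh {s A B C D} _ _.
Arguments tunit {s}.
Arguments alpha {s} A B C.
Arguments alpha_inv {s} A B C.
Arguments lam {s} A.
Arguments lam_inv {s} A.
Arguments rho {s} A.
Arguments rho_inv {s} A.

Section Defs.
Context {K : SMCat}.

Definition is_category : Prop :=
  (forall (A B C D : Ob K) (h : Hom C D) (g : Hom B C) (f : Hom A B),
      comp h (comp g f) = comp (comp h g) f) /\
  (forall (A B : Ob K) (f : Hom A B), comp (idm B) f = f) /\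
  (forall (A B : Ob K) (f : Hom A B), comp f (idm A) = f).

Definition is_cmon_enriched : Prop :=
  (forall (A B : Ob K) (f g h : Hom A B), hadd f (hadd g h) = hadd (hadd f g) h) /\
  (forall (A B : Ob K) (f g : Hom A B), hadd f g = hadd g f) /\
  (forall (A B : Ob K) (f : Hom A B), hadd (hzero A B) f = f) /\
  (forall (A B C : Ob K) (g g' : Hom B C) (f : Hom A B),
      comp (hadd g g') f = hadd (comp g f) (comp g' f)) /\
  (forall (A B C : Ob K) (g : Hom B C) (f f' : Hom A B),
      comp g (hadd f f') = hadd (comp g f) (comp g f')) /\
  (forall (A B C : Ob K) (f : Hom A B), comp (hzero B C) f = hzero A C) /\
  (forall (A B C : Ob K) (g : Hom B C), comp g (hzero A B) = hzero A C).

Definition is_zero_obj (O : Ob K) : Prop :=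
  forall Y : Ob K,
    (forall f g : Hom O Y, f = g) /\ (forall f g : Hom Y O, f = g).

Definition is_initial (O : Ob K) : Prop :=
  forall Y : Ob K, exists! f : Hom O Y, True.

Definition is_coproduct (A B P : Ob K) (i1 : Hom A P) (i2 : Hom B P) : Prop :=
  forall (Z : Ob K) (f : Hom A Z) (g : Hom B Z),
    exists! h : Hom P Z, comp h i1 = f /\ comp h i2 = g.

Definition is_semiadditive : Prop :=
  is_category /\ is_cmon_enriched /\
  (exists Z : Ob K, is_zero_obj Z) /\
  (forall A B : Ob K, exists (P : Ob K) (i1 : Hom A P) (i2 : Hom B P)
                             (p1 : Hom P A) (p2 : Hom P B),
      comp p1 i1 = idm A /\ comp p2 i2 = idm B /\
      comp p1 i2 = hzero B A /\ comp p2 i1 = hzero A B /\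
      hadd (comp i1 p1) (comp i2 p2) = idm P).

Definition is_iso {A B : Ob K} (f : Hom A B) : Prop :=
  exists g : Hom B A, comp g f = idm A /\ comp f g = idm B.

(* Monoidal (= E_1-monoidal) structure axioms. *)
Definition is_monoidal : Prop :=
  (forall A B : Ob K, tensh (idm A) (idm B) = idm (tens A B)) /\
  (forall (A B C A' B' C' : Ob K) (g : Hom B C) (f : Hom A B)
          (g' : Hom B' C') (f' : Hom A' B'),
      tensh (comp g f) (comp g' f') = comp (tensh g g') (tensh f f')) /\
  (forall (A A' B B' C C' : Ob K) (f : Hom A A') (g : Hom B B') (h : Hom C C'),
      comp (alpha A' B' C') (tensh (tensh f g) h)
      = comp (tensh f (tensh g h)) (alpha A B C)) /\
  (forall A B C : Ob K,
      comp (alpha_inv A B C) (alpha A B C) = idm _ /\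
      comp (alpha A B C) (alpha_inv A B C) = idm _) /\
  (forall (A B : Ob K) (f : Hom A B),
      comp (lam B) (tensh (idm tunit) f) = comp f (lam A)) /\
  (forall A : Ob K, comp (lam_inv A) (lam A) = idm _ /\ comp (lam A) (lam_inv A) = idm _) /\
  (forall (A B : Ob K) (f : Hom A B),
      comp (rho B) (tensh f (idm tunit)) = comp f (rho A)) /\
  (forall A : Ob K, comp (rho_inv A) (rho A) = idm _ /\ comp (rho A) (rho_inv A) = idm _) /\
  (forall A B C D : Ob K,
      comp (alpha A B (tens C D)) (alpha (tens A B) C D)
      = comp (tensh (idm A) (alpha B C D))
             (comp (alpha A (tens B C) D) (tensh (alpha A B C) (idm D)))) /\
  (forall A B : Ob K,
      comp (tensh (idm A) (lam B)) (alpha A tunit B) = tensh (rho A) (idm B)).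

Definition is_cofiber {A B : Ob K} (f : Hom A B) (E : Ob K) (q : Hom B E) : Prop :=
  comp q f = hzero A E /\
  forall (Z : Ob K) (g : Hom B Z),
    comp g f = hzero A Z -> exists! h : Hom E Z, comp h q = g.

Definition has_cofibers : Prop :=
  forall (A B : Ob K) (f : Hom A B), exists (E : Ob K) (q : Hom B E), is_cofiber f E q.

Definition tensor_distributes : Prop :=
  forall X : Ob K,
    (forall O : Ob K, is_initial O -> is_initial (tens X O) /\ is_initial (tens O X)) /\
    (forall (A B P : Ob K) (i1 : Hom A P) (i2 : Hom B P), is_coproduct A B P i1 i2 ->
       is_coproduct (tens X A) (tens X B) (tens X P) (tensh (idm X) i1) (tensh (idm X) i2) /\
       is_coproduct (tens A X) (tens B X) (tens P X) (tensh i1 (idm X)) (tensh i2 (idm X))) /\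
    (forall (A B E : Ob K) (f : Hom A B) (q : Hom B E), is_cofiber f E q ->
       is_cofiber (tensh (idm X) f) (tens X E) (tensh (idm X) q) /\
       is_cofiber (tensh f (idm X)) (tens E X) (tensh q (idm X))).

Fixpoint nmul {A B : Ob K} (f : Hom A B) (n : nat) : Hom A B :=
  match n with
  | O => hzero A B
  | S n' => hadd f (nmul f n')
  end.

Definition closed_idempotent (E : Ob K) (r : Hom tunit E) : Prop :=
  is_iso (tensh r (idm E)).

Definition is_stable (E : Ob K) (r : Hom tunit E) (X : Ob K) : Prop :=
  is_iso (tensh r (idm X)).

Definition is_torsion (E X : Ob K) : Prop := is_zero_obj (tens E X).

End Defs.


(* The tensor product preserves the initial object and binary coproducts in
   each variable, so [X ∧ -] and [- ∧ X] are additive; hence, up to the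
   unitors, [S/m ∧ X] and [X ∧ S/m] are cofibers of [m : X -> X].  A cofiber
   [q] of a map [f] is an isomorphism iff [f = 0], is a zero object iff every
   map killing [f] vanishes, and precomposition with [q] identifies the maps
   out of it with the maps killing [f].  For [f = m] this describes the stable
   objects, the torsion objects and the maps out of [C ∧ S/m]; and [S/m] is
   stable, i.e. a closed idempotent, because [m ∘ r = r ∘ m = 0] with [r] epi
   forces [m = 0] on [S/m]. *)

Definition is_biproduct {K : SMCat} {A B P : Ob K}
    (i1 : Hom A P) (i2 : Hom B P) (p1 : Hom P A) (p2 : Hom P B) : Prop :=
  comp p1 i1 = idm A /\ comp p2 i2 = idm B /\
  comp p1 i2 = hzero B A /\ comp p2 i1 = hzero A B /\
  hadd (comp i1 p1) (comp i2 p2) = idm P.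

Definition killed_by {K : SMCat} (n : nat) (X : Ob K) : Prop :=
  nmul (idm X) n = hzero X X.

Definition hom_torsion_free {K : SMCat} (n : nat) (X : Ob K) : Prop :=
  forall (D : Ob K) (g : Hom X D), nmul g n = hzero X D -> g = hzero X D.

Lemma zero_obj_initial {K : SMCat} (Z : Ob K) : is_zero_obj Z -> is_initial Z.
Proof.
  intros HZ Y. exists (hzero Z Y). split; [exact I | intros; apply HZ].
Qed.

Section Semiadditive.
Context {K : SMCat} (Hsa : is_semiadditive (K := K)).

Lemma comp_assoc {A B C D : Ob K} (h : Hom C D) (g : Hom B C) (f : Hom A B) :
  comp h (comp g f) = comp (comp h g) f.
Proof. destruct Hsa as [[H _] _]; apply H. Qed.

Lemma comp_idl {A B : Ob K} (f : Hom A B) : comp (idm B) f = f.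
Proof. destruct Hsa as [[_ [H _]] _]; apply H. Qed.

Lemma comp_idr {A B : Ob K} (f : Hom A B) : comp f (idm A) = f.
Proof. destruct Hsa as [[_ [_ H]] _]; apply H. Qed.

Lemma hadd_0l {A B : Ob K} (f : Hom A B) : hadd (hzero A B) f = f.
Proof. destruct Hsa as [_ [[_ [_ [H _]]] _]]; apply H. Qed.

Lemma hadd_0r {A B : Ob K} (f : Hom A B) : hadd f (hzero A B) = f.
Proof. destruct Hsa as [_ [[_ [H _]] _]]; rewrite H; apply hadd_0l. Qed.

Lemma comp_haddl {A B C : Ob K} (g g' : Hom B C) (f : Hom A B) :
  comp (hadd g g') f = hadd (comp g f) (comp g' f).
Proof. destruct Hsa as [_ [[_ [_ [_ [H _]]]] _]]; apply H. Qed.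

Lemma comp_haddr {A B C : Ob K} (g : Hom B C) (f f' : Hom A B) :
  comp g (hadd f f') = hadd (comp g f) (comp g f').
Proof. destruct Hsa as [_ [[_ [_ [_ [_ [H _]]]]] _]]; apply H. Qed.

Lemma comp_0l {A B C : Ob K} (f : Hom A B) : comp (hzero B C) f = hzero A C.
Proof. destruct Hsa as [_ [[_ [_ [_ [_ [_ [H _]]]]]] _]]; apply H. Qed.

Lemma comp_0r {A B C : Ob K} (g : Hom B C) : comp g (hzero A B) = hzero A C.
Proof. destruct Hsa as [_ [[_ [_ [_ [_ [_ [_ H]]]]]] _]]; apply H. Qed.

Lemma nmul_compl {A B C : Ob K} (g : Hom B C) (f : Hom A B) n :
  nmul (comp g f) n = comp g (nmul f n).
Proof.
  induction n as [|n IHn]; simpl.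
  - symmetry; apply comp_0r.
  - rewrite comp_haddr, IHn; reflexivity.
Qed.

Lemma nmul_compr {A B C : Ob K} (g : Hom B C) (f : Hom A B) n :
  nmul (comp g f) n = comp (nmul g n) f.
Proof.
  induction n as [|n IHn]; simpl.
  - symmetry; apply comp_0l.
  - rewrite comp_haddl, IHn; reflexivity.
Qed.

Lemma nmul_idr {A B : Ob K} (f : Hom A B) n : comp f (nmul (idm A) n) = nmul f n.
Proof. rewrite <- nmul_compl, comp_idr; reflexivity. Qed.

Lemma nmul_idl {A B : Ob K} (f : Hom A B) n : comp (nmul (idm B) n) f = nmul f n.
Proof. rewrite <- nmul_compr, comp_idl; reflexivity. Qed.

Lemma copair_comp_i1 {A B P Z : Ob K} (i1 : Hom A P) (p1 : Hom P A) (p2 : Hom P B)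
    (a : Hom A Z) (b : Hom B Z) :
  comp p1 i1 = idm A -> comp p2 i1 = hzero A B ->
  comp (hadd (comp a p1) (comp b p2)) i1 = a.
Proof.
  intros H1 H2. rewrite comp_haddl, <- !comp_assoc, H1, H2, comp_idr, comp_0r.
  apply hadd_0r.
Qed.

Lemma copair_comp_i2 {A B P Z : Ob K} (i2 : Hom B P) (p1 : Hom P A) (p2 : Hom P B)
    (a : Hom A Z) (b : Hom B Z) :
  comp p1 i2 = hzero B A -> comp p2 i2 = idm B ->
  comp (hadd (comp a p1) (comp b p2)) i2 = b.
Proof.
  intros H1 H2. rewrite comp_haddl, <- !comp_assoc, H1, H2, comp_idr, comp_0r.
  apply hadd_0l.
Qed.

Lemma biproduct_coproduct {A B P : Ob K} (i1 : Hom A P) (i2 : Hom B P)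
    (p1 : Hom P A) (p2 : Hom P B) :
  is_biproduct i1 i2 p1 p2 -> is_coproduct A B P i1 i2.
Proof.
  intros (H11 & H22 & H12 & H21 & Hsplit) Z a b.
  exists (hadd (comp a p1) (comp b p2)). split.
  - split; [apply copair_comp_i1 | apply copair_comp_i2]; assumption.
  - intros h [<- <-].
    rewrite <- !comp_assoc, <- comp_haddr, Hsplit. apply comp_idr.
Qed.

Lemma coproduct_split_id {A B P : Ob K} (i1 : Hom A P) (i2 : Hom B P)
    (p1 : Hom P A) (p2 : Hom P B) :
  is_coproduct A B P i1 i2 ->
  comp p1 i1 = idm A -> comp p2 i2 = idm B ->
  comp p1 i2 = hzero B A -> comp p2 i1 = hzero A B ->
  hadd (comp i1 p1) (comp i2 p2) = idm P.
Proof.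
  intros Hcop H11 H22 H12 H21.
  destruct (Hcop P i1 i2) as [h [_ Hh]].
  transitivity h; [symmetry |]; apply Hh; split.
  - apply copair_comp_i1; assumption.
  - apply copair_comp_i2; assumption.
  - apply comp_idl.
  - apply comp_idl.
Qed.

Section AdditiveFunctor.
Variable Fo : Ob K -> Ob K.
Variable F : forall A B : Ob K, Hom A B -> Hom (Fo A) (Fo B).
Arguments F {A B}.
Hypothesis F_id : forall A : Ob K, F (idm A) = idm (Fo A).
Hypothesis F_comp : forall (A B C : Ob K) (g : Hom B C) (f : Hom A B),
  F (comp g f) = comp (F g) (F f).
Hypothesis F_initial : forall O : Ob K, is_initial O -> is_initial (Fo O).
Hypothesis F_coproduct : forall (A B P : Ob K) (i1 : Hom A P) (i2 : Hom B P),
  is_coproduct A B P i1 i2 -> is_coproduct (Fo A) (Fo B) (Fo P) (F i1) (F i2).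

Lemma functor_hzero (A B : Ob K) : F (hzero A B) = hzero (Fo A) (Fo B).
Proof.
  destruct Hsa as [_ [_ [[Z HZ] _]]].
  destruct (F_initial Z (zero_obj_initial Z HZ) (Fo B)) as [u [_ Hu]].
  rewrite <- (comp_0l (C := B) (hzero A Z)), F_comp.
  rewrite <- (Hu (F (hzero Z B)) I), (Hu (hzero (Fo Z) (Fo B)) I).
  apply comp_0l.
Qed.

(* [f + g = (f p1 + g p2) ∘ (i1 + i2)] through the biproduct [A ⊕ A], and
   [F] preserves biproducts, so [F (i1 + i2) = F i1 + F i2]. *)
Lemma functor_hadd {A B : Ob K} (f g : Hom A B) : F (hadd f g) = hadd (F f) (F g).
Proof.
  destruct Hsa as [_ [_ [_ Hbi]]].
  destruct (Hbi A A) as (P & i1 & i2 & p1 & p2 & Hbip).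
  pose proof Hbip as (H11 & H22 & H12 & H21 & _).
  assert (F_split : hadd (comp (F i1) (F p1)) (comp (F i2) (F p2)) = idm (Fo P)).
  { apply coproduct_split_id.
    - exact (F_coproduct _ _ _ _ _ (biproduct_coproduct _ _ _ _ Hbip)).
    - rewrite <- F_comp, H11; apply F_id.
    - rewrite <- F_comp, H22; apply F_id.
    - rewrite <- F_comp, H12; apply functor_hzero.
    - rewrite <- F_comp, H21; apply functor_hzero. }
  assert (F_codiag : F (hadd i1 i2) = hadd (F i1) (F i2)).
  { rewrite <- (comp_idl (F (hadd i1 i2))), <- F_split, comp_haddl, <- !comp_assoc.
    rewrite <- (F_comp _ _ _ p1), <- (F_comp _ _ _ p2), !comp_haddr.
    rewrite H11, H12, H21, H22, hadd_0r, hadd_0l, !F_id, !comp_idr.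
    reflexivity. }
  assert (Hfg : hadd f g = comp (hadd (comp f p1) (comp g p2)) (hadd i1 i2)).
  { rewrite comp_haddr, copair_comp_i1, copair_comp_i2 by assumption. reflexivity. }
  rewrite Hfg, F_comp, F_codiag, comp_haddr, <- !F_comp.
  rewrite copair_comp_i1, copair_comp_i2 by assumption. reflexivity.
Qed.

Lemma functor_nmul {A B : Ob K} (f : Hom A B) n : F (nmul f n) = nmul (F f) n.
Proof.
  induction n as [|n IHn]; simpl.
  - apply functor_hzero.
  - rewrite functor_hadd, IHn; reflexivity.
Qed.

End AdditiveFunctor.

Lemma cofiber_epi {A B E Y : Ob K} (f : Hom A B) (q : Hom B E) (h h' : Hom E Y) :
  is_cofiber f E q -> comp h q = comp h' q -> h = h'.
Proof.
  intros [Hq Hu] Heq.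
  assert (Hkill : comp (comp h q) f = hzero A Y).
  { rewrite <- comp_assoc, Hq; apply comp_0r. }
  destruct (Hu Y _ Hkill) as [x [_ Hx]].
  exact (eq_trans (eq_sym (Hx h eq_refl)) (Hx h' (eq_sym Heq))).
Qed.

Lemma cofiber_iso_iff {A B E : Ob K} (f : Hom A B) (q : Hom B E) :
  is_cofiber f E q -> (is_iso q <-> f = hzero A B).
Proof.
  intros Hc. split.
  - intros [v [Hvq _]].
    rewrite <- (comp_idl f), <- Hvq, <- comp_assoc, (proj1 Hc). apply comp_0r.
  - intros Hf.
    destruct (proj2 Hc B (idm B)) as [v [Hvq _]].
    { rewrite Hf; apply comp_0r. }
    exists v. split; [exact Hvq |].
    apply (cofiber_epi f q _ _ Hc).
    rewrite <- comp_assoc, Hvq, comp_idl, comp_idr. reflexivity.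
Qed.

Lemma cofiber_zero_obj_iff {A B E : Ob K} (f : Hom A B) (q : Hom B E) :
  is_cofiber f E q ->
  (is_zero_obj E <->
   forall (Z : Ob K) (g : Hom B Z), comp g f = hzero A Z -> g = hzero B Z).
Proof.
  intros Hc. split.
  - intros HE Z g Hg.
    destruct (proj2 Hc Z g Hg) as [h [<- _]].
    rewrite (proj1 (HE Z) h (hzero E Z)). apply comp_0l.
  - intros Hkill.
    assert (Hid : idm E = hzero E E).
    { apply (cofiber_epi f q _ _ Hc).
      rewrite comp_idl, comp_0l. apply Hkill, (proj1 Hc). }
    intros Y. split; intros u v.
    + rewrite <- (comp_idr u), <- (comp_idr v), Hid, !comp_0r. reflexivity.
    + rewrite <- (comp_idl u), <- (comp_idl v), Hid, !comp_0l. reflexivity.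
Qed.

Lemma killed_by_iff n (X : Ob K) :
  killed_by n X <-> forall (D : Ob K) (g : Hom X D), nmul g n = hzero X D.
Proof.
  split; intros H.
  - intros D g. rewrite <- nmul_idr, H. apply comp_0r.
  - apply H.
Qed.

Lemma killed_by_retract n {A B : Ob K} (u : Hom A B) (v : Hom B A) :
  comp v u = idm A -> killed_by n B -> killed_by n A.
Proof.
  unfold killed_by. intros Hvu HB.
  rewrite <- Hvu, nmul_compl, <- (nmul_idl u), HB, comp_0l. apply comp_0r.
Qed.

Lemma hom_torsion_free_retract n {A B : Ob K} (u : Hom A B) (v : Hom B A) :
  comp v u = idm A -> hom_torsion_free n B -> hom_torsion_free n A.
Proof.
  intros Hvu HB D g Hg.
  rewrite <- (comp_idr g), <- Hvu, comp_assoc, (HB D (comp g v)).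
  - apply comp_0l.
  - rewrite nmul_compr, Hg. apply comp_0l.
Qed.

Section Tensor.
Hypotheses (Hmon : is_monoidal (K := K)) (Hdist : tensor_distributes (K := K)).

Lemma lam_iso (X : Ob K) :
  comp (lam_inv X) (lam X) = idm _ /\ comp (lam X) (lam_inv X) = idm _.
Proof. destruct Hmon as [_ [_ [_ [_ [_ [H _]]]]]]; apply H. Qed.

Lemma rho_iso (X : Ob K) :
  comp (rho_inv X) (rho X) = idm _ /\ comp (rho X) (rho_inv X) = idm _.
Proof. destruct Hmon as [_ [_ [_ [_ [_ [_ [_ [H _]]]]]]]]; apply H. Qed.

Lemma tensh_idl_nmul (X A : Ob K) n :
  tensh (idm X) (nmul (idm A) n) = nmul (idm (tens X A)) n.
Proof.
  destruct Hmon as [Htid [Htcomp _]].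
  rewrite (functor_nmul (tens X) (fun A B f => tensh (idm X) f)), Htid.
  - reflexivity.
  - intros; apply Htid.
  - intros; rewrite <- Htcomp, comp_idl; reflexivity.
  - intros O HO; apply (Hdist X), HO.
  - intros * Hc; apply (Hdist X), Hc.
Qed.

Lemma tensh_idr_nmul (X A : Ob K) n :
  tensh (nmul (idm A) n) (idm X) = nmul (idm (tens A X)) n.
Proof.
  destruct Hmon as [Htid [Htcomp _]].
  rewrite (functor_nmul (fun A => tens A X) (fun A B f => tensh f (idm X))), Htid.
  - reflexivity.
  - intros; apply Htid.
  - intros; rewrite <- Htcomp, comp_idl; reflexivity.
  - intros O HO; apply (Hdist X), HO.
  - intros * Hc; apply (Hdist X), Hc.
Qed.

Section CofiberOfMultiplication.
Variables (m : nat) (E : Ob K) (r : Hom tunit E).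
Hypothesis Hr : is_cofiber (nmul (idm tunit) m) E r.

Definition restrict_along_unit {C D : Ob K} (f : Hom (tens C E) D) : Hom C D :=
  comp f (comp (tensh (idm C) r) (rho_inv C)).

Lemma cofiber_tensh_l (X : Ob K) :
  is_cofiber (nmul (idm (tens X tunit)) m) (tens X E) (tensh (idm X) r).
Proof. rewrite <- tensh_idl_nmul. apply (Hdist X), Hr. Qed.

Lemma cofiber_tensh_r (X : Ob K) :
  is_cofiber (nmul (idm (tens tunit X)) m) (tens E X) (tensh r (idm X)).
Proof. rewrite <- tensh_idr_nmul. apply (Hdist X), Hr. Qed.

Lemma killed_by_cofiber : killed_by m E.
Proof.
  apply (cofiber_epi _ r _ _ Hr).
  rewrite nmul_idl, <- nmul_idr, (proj1 Hr), comp_0l. reflexivity.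
Qed.

Lemma killed_by_tens_unit (X : Ob K) : killed_by m (tens tunit X) <-> killed_by m X.
Proof.
  destruct (lam_iso X) as [H1 H2].
  split; [apply (killed_by_retract m (lam_inv X) (lam X) H2)
         | apply (killed_by_retract m (lam X) (lam_inv X) H1)].
Qed.

Lemma stable_iff_killed_by (X : Ob K) : is_stable E r X <-> killed_by m X.
Proof.
  exact (iff_trans (cofiber_iso_iff _ _ (cofiber_tensh_r X)) (killed_by_tens_unit X)).
Qed.

Lemma torsion_iff_hom_torsion_free (X : Ob K) :
  is_torsion E X <-> hom_torsion_free m X.
Proof.
  destruct (lam_iso X) as [H1 H2].
  apply (iff_trans (cofiber_zero_obj_iff _ _ (cofiber_tensh_r X))).
  split; intros H.
  - apply (hom_torsion_free_retract m (lam_inv X) (lam X) H2).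
    intros D g Hg. apply H. rewrite nmul_idr. exact Hg.
  - intros D g Hg. apply (hom_torsion_free_retract m (lam X) (lam_inv X) H1 H).
    rewrite <- nmul_idr. exact Hg.
Qed.

Lemma restrict_along_unit_killed {C D : Ob K} (f : Hom (tens C E) D) :
  nmul (restrict_along_unit f) m = hzero C D.
Proof.
  unfold restrict_along_unit.
  rewrite nmul_compl, nmul_compr, <- nmul_idr, (proj1 (cofiber_tensh_l C)), comp_0l.
  apply comp_0r.
Qed.

Lemma restrict_along_unit_inj {C D : Ob K} (f g : Hom (tens C E) D) :
  restrict_along_unit f = restrict_along_unit g -> f = g.
Proof.
  unfold restrict_along_unit. intros H.
  rewrite !comp_assoc in H.
  apply (cofiber_epi _ _ _ _ (cofiber_tensh_l C)).
  rewrite <- (comp_idr (comp f _)), <- (comp_idr (comp g _)), <- (proj1 (rho_iso C)).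
  rewrite !comp_assoc, H. reflexivity.
Qed.

Lemma restrict_along_unit_surj {C D : Ob K} (g : Hom C D) :
  nmul g m = hzero C D -> exists f : Hom (tens C E) D, restrict_along_unit f = g.
Proof.
  intros Hg.
  destruct (proj2 (cofiber_tensh_l C) D (comp g (rho C))) as [f [Hf _]].
  { rewrite nmul_idr, nmul_compr, Hg. apply comp_0l. }
  exists f. unfold restrict_along_unit.
  rewrite comp_assoc, Hf, <- comp_assoc, (proj2 (rho_iso C)). apply comp_idr.
Qed.

End CofiberOfMultiplication.
End Tensor.
End Semiadditive.

Theorem proposition5p15 (K : SMCat)
  (Hsa : is_semiadditive (K := K)) (Hmon : is_monoidal (K := K))
  (Hcof : has_cofibers (K := K)) (Hdist : tensor_distributes (K := K))
  (m : nat) (E : Ob K) (r : Hom tunit E)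
  (Hr : is_cofiber (nmul (idm tunit) m) E r) :
  closed_idempotent E r /\
  (forall C D : Ob K,
     let Phi := fun f : Hom (tens C E) D =>
                  comp f (comp (tensh (idm C) r) (rho_inv C)) in
     (forall f : Hom (tens C E) D, nmul (Phi f) m = hzero C D) /\
     (forall f g : Hom (tens C E) D, Phi f = Phi g -> f = g) /\
     (forall g : Hom C D, nmul g m = hzero C D ->
        exists f : Hom (tens C E) D, Phi f = g)) /\
  (forall X : Ob K,
     is_stable E r X <-> (forall (D : Ob K) (g : Hom X D), nmul g m = hzero X D)) /\
  (forall X : Ob K,
     is_torsion E X <->
     (forall (D : Ob K) (g : Hom X D), nmul g m = hzero X D -> g = hzero X D)).
Proof.
  split; [| split; [| split]].
  - apply (stable_iff_killed_by Hsa Hmon Hdist m E r Hr E).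
    exact (killed_by_cofiber Hsa m E r Hr).
  - intros C D Phi. split; [| split].
    + exact (restrict_along_unit_killed Hsa Hmon Hdist m E r Hr).
    + exact (restrict_along_unit_inj Hsa Hmon Hdist m E r Hr).
    + exact (restrict_along_unit_surj Hsa Hmon Hdist m E r Hr).
  - intros X.
    exact (iff_trans (stable_iff_killed_by Hsa Hmon Hdist m E r Hr X) (killed_by_iff Hsa m X)).
  - exact (torsion_iff_hom_torsion_free Hsa Hmon Hdist m E r Hr).
Qed.
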